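(* Let $p$ be a prime and let $R$ be the ring whose additive group is $\mathbb{Z}_{p^2}\oplus\mathbb{Z}_p\oplus\mathbb{Z}_p$ with basis $\{1,t,y\}$ (elements $r+st+hy$ with $r\in\mathbb{Z}_{p^2}$, $s,h\in\mathbb{Z}_p$), $1$ the identity, and multiplication determined by $t^2=0$, $y^2=y$, $ty=0$, $yt=t$. Then the pair $(1-t-y,\,t)\in R^2$ is not unimodular, the cyclic submodule $R(1-t-y,t)$ is free, and $(1-t-y,t)$ is an outlier.
   Context: $R^2$ is the free left $R$-module of pairs; $R(a,b)=\{(\alpha a,\alpha b):\alpha\in R\}$ is free if $r(a,b)=(0,0)$ implies $r=0$. A pair $(a,b)$ is (right) unimodular if there exist $x,y\in R$ with $ax+by=1$; it is an outlier if there are no $r\in R$ and unimodular $(x,y)\in R^2$ with $(a,b)=r(x,y)$. *)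

From HB Require Import structures.
From mathcomp Require Import all_boot all_order all_algebra.
Set Implicit Arguments. Unset Strict Implicit. Unset Printing Implicit Defensive.
Import GRing.Theory.
Local Open Scope ring_scope.

(* The ring R = Z_{p^2} + Z_p t + Z_p y, an element r + s t + h y being
   represented by the triple (r, s, h). *)
Definition Rp (p : nat) : Type := ('Z_(p ^ 2) * 'Z_p * 'Z_p)%type.

Section Ring.
Variable p : nat.

(* reduction Z_{p^2} -> Z_p (coefficients of t and y live in Z_p) *)
Definition red (r : 'Z_(p ^ 2)) : 'Z_p := inZp (nat_of_ord r).

Definition Rmk (r : 'Z_(p ^ 2)) (s h : 'Z_p) : Rp p := (r, s, h).
Definition rc (x : Rp p) : 'Z_(p ^ 2) := x.1.1.
Definition sc (x : Rp p) : 'Z_p := x.1.2.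
Definition hc (x : Rp p) : 'Z_p := x.2.

Definition R0 : Rp p := Rmk 0 0 0.
Definition R1 : Rp p := Rmk 1 0 0.
Definition Rt : Rp p := Rmk 0 1 0.
Definition Ry : Rp p := Rmk 0 0 1.

Definition Radd (a b : Rp p) : Rp p :=
  Rmk (rc a + rc b) (sc a + sc b) (hc a + hc b).
Definition Ropp (a : Rp p) : Rp p := Rmk (- rc a) (- sc a) (- hc a).
Definition Rsub (a b : Rp p) : Rp p := Radd a (Ropp b).

(* (r1 + s1 t + h1 y)(r2 + s2 t + h2 y), using t^2 = 0, y^2 = y, ty = 0, yt = t:
   = r1 r2 + (r1 s2 + s1 r2 + h1 s2) t + (r1 h2 + h1 r2 + h1 h2) y *)
Definition Rmul (a b : Rp p) : Rp p :=
  Rmk (rc a * rc b)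
      (red (rc a) * sc b + sc a * red (rc b) + hc a * sc b)
      (red (rc a) * hc b + hc a * red (rc b) + hc a * hc b).

Definition unimodular (a b : Rp p) : Prop :=
  exists x y : Rp p, Radd (Rmul a x) (Rmul b y) = R1.

(* R(a,b) is a free left R-module: r(a,b) = (0,0) implies r = 0 *)
Definition cyclic_free (a b : Rp p) : Prop :=
  forall r : Rp p, Rmul r a = R0 -> Rmul r b = R0 -> r = R0.

Definition outlier (a b : Rp p) : Prop :=
  ~ exists r x y : Rp p, unimodular x y /\ a = Rmul r x /\ b = Rmul r y.

End Ring.

(* Besides the reduction Z_{p^2} -> Z_p of constant terms, R has the ring
   morphism ev1 : R -> Z_p evaluating at t = 0, y = 1.  It kills both 1 - t - y
   and t, so they cannot generate the unit ideal.  If 1 - t - y = r x and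
   t = r y, the constant term of r is a unit, so that of y is 0; the
   t-coefficient of r y is then ev1 r times that of y, so ev1 r is a unit and
   ev1 x = ev1 y = 0: the pair (x, y) is not unimodular either. *)

From mathcomp Require Import all_boot all_order all_algebra.
From mathcomp Require Import ring.
Set Implicit Arguments.
Unset Strict Implicit.
Unset Printing Implicit Defensive.
Import GRing.Theory.
Local Open Scope ring_scope.

Section ModelR.
Variable p : nat.
Hypothesis p_gt1 : (1 < p)%N.

Let p2_gt1 : (1 < p ^ 2)%N.
Proof. by rewrite (ltn_trans p_gt1) // -[X in (X < _)%N]expn1 ltn_exp2l. Qed.

Lemma red_natr (m : nat) : red (m%:R : 'Z_(p ^ 2)) = m%:R.
Proof.
apply: val_inj; rewrite /red !Zp_nat /= (Zp_cast p_gt1) (Zp_cast p2_gt1).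
by rewrite modn_dvdm // dvdn_exp.
Qed.

Lemma red_add (a b : 'Z_(p ^ 2)) : red (a + b) = red a + red b.
Proof. by rewrite -(natr_Zp a) -(natr_Zp b) -natrD !red_natr natrD. Qed.

Lemma red_mul (a b : 'Z_(p ^ 2)) : red (a * b) = red a * red b.
Proof. by rewrite -(natr_Zp a) -(natr_Zp b) -natrM !red_natr natrM. Qed.

Lemma red1 : red (1 : 'Z_(p ^ 2)) = 1.
Proof. exact: (red_natr 1). Qed.

Lemma red0 : red (0 : 'Z_(p ^ 2)) = 0.
Proof. exact: (red_natr 0). Qed.

Definition ev1 (x : Rp p) : 'Z_p := red (rc x) + hc x.

Lemma ev1_add (a b : Rp p) : ev1 (Radd a b) = ev1 a + ev1 b.
Proof. by rewrite /ev1 /= red_add addrACA. Qed.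

Lemma ev1_mul (a b : Rp p) : ev1 (Rmul a b) = ev1 a * ev1 b.
Proof. rewrite /ev1 /= red_mul; ring. Qed.

Lemma ev1_R1 : ev1 (R1 p) = 1.
Proof. by rewrite /ev1 /= red1 addr0. Qed.

Lemma rc_mul (a b : Rp p) : rc (Rmul a b) = rc a * rc b.
Proof. by []. Qed.

Lemma sc_mul_rc0 (a b : Rp p) : rc b = 0 -> sc (Rmul a b) = ev1 a * sc b.
Proof. by move=> b0; rewrite /sc /= b0 red0 mulr0 addr0 -mulrDl. Qed.

Lemma not_unimodular_ev1 (a b : Rp p) :
  ev1 a = 0 -> ev1 b = 0 -> ~ unimodular a b.
Proof.
move=> a0 b0 [x [y /(congr1 ev1)]].
rewrite ev1_add !ev1_mul a0 b0 ev1_R1 !mul0r addr0 => /esym/eqP.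
by rewrite oner_eq0.
Qed.

Lemma outlier_ev1 (a b : Rp p) :
  rc a \is a GRing.unit -> ev1 a = 0 ->
  rc b = 0 -> sc b \is a GRing.unit -> ev1 b = 0 -> outlier a b.
Proof.
move=> ua ea0 rb0 ub eb0 [r [x [y [uxy [Ea Eb]]]]]; subst a b.
have ur : rc r \is a GRing.unit by move: ua; rewrite rc_mul unitrM => /andP[].
have y0 : rc y = 0 by apply: (mulrI ur); rewrite -rc_mul rb0 mulr0.
have uev : ev1 r \is a GRing.unit.
  by move: ub; rewrite sc_mul_rc0 // unitrM => /andP[].
by apply: (not_unimodular_ev1 _ _ uxy); apply: (mulrI uev);
  rewrite -ev1_mul mulr0.
Qed.

Lemma cyclic_free_t (s h : 'Z_p) : cyclic_free (Rmk 1 s h) (Rt p).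
Proof.
move=> [[r0 s0] h0]; rewrite /Rmul /R0 /Rt /Rmk /rc /sc /hc /= mulr1.
move=> /pair_equal_spec[/pair_equal_spec[-> Es] _].
move=> /pair_equal_spec[/pair_equal_spec[_ Ft] _]; rewrite red0 in Es Ft.
rewrite mul0r mulr0 !add0r mulr1 in Ft.
rewrite Ft red1 !mul0r mulr1 add0r addr0 in Es.
by rewrite Es Ft.
Qed.

End ModelR.

Lemma R1_sub_t_sub_yE (p : nat) :
  Rsub (Rsub (R1 p) (Rt p)) (Ry p) = Rmk 1 (-1) (-1).
Proof. by rewrite /Rsub /Radd /Ropp /Rmk /= !oppr0 !addr0 !add0r. Qed.

Theorem mainTheorem15 (p : nat) (hp : prime p) :
  let a := Rsub (Rsub (R1 p) (Rt p)) (Ry p) in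
  let b := Rt p in
  ~ unimodular a b /\ cyclic_free a b /\ outlier a b.
Proof.
move=> a b; rewrite {}/a {}/b R1_sub_t_sub_yE.
have p_gt1 := prime_gt1 hp.
have ev1_a : ev1 (Rmk 1 (-1) (-1 : 'Z_p)) = 0 by rewrite /ev1 /= (red1 p_gt1) subrr.
have ev1_t : ev1 (Rt p) = 0 by rewrite /ev1 /= (red0 p_gt1) addr0.
split; [|split].
- exact: not_unimodular_ev1.
- exact: cyclic_free_t.
- by apply: outlier_ev1; rewrite // unitr1.
Qed.
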